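(* Let $\lambda\in B^{(k,r)}$ and let $\lambda'$ be an enlargement of $\lambda$. Then $\lambda'$ is intertwined with $\lambda$.
   Context: Let $P=\mathbb Z^n$. For $\lambda\in P$, $\rho(\lambda)$ is the unique permutation of $(\frac{n-1}2,\dots,-\frac{n-1}2)$ with $\rho(\lambda)_i>\rho(\lambda)_j$ iff $\lambda_i>\lambda_j$ or ($\lambda_i=\lambda_j$, $i<j$); let $(i_1,\dots,i_n)$ be the indices with $\rho(\lambda)_{i_a}=\frac{n+1}2-a$. $\omega\lambda=(\lambda_2,\dots,\lambda_n,\lambda_1+1)$; $s_i\lambda$ swaps $\lambda_i,\lambda_{i+1}$. Fix $1\le k\le n-1$, $r\ge2$, $g=\gcd(k+1,r-1)$, $\tau=e^{2\pi\sqrt{-1}/(r-1)}$, specialization $(\ast)$: $t=u^{(r-1)/g}$, $q=\tau u^{-(k+1)/g}$. $u_\lambda(f)=f(t^{-\rho(\lambda)_1}q^{-\lambda_1},\dots,t^{-\rho(\lambda)_n}q^{-\lambda_n})$. ''Intertwined'' is the equivalence relation on $P$ generated by $\lambda\sim\omega\lambda$ and by $\lambda\sim s_i\lambda$ whenever $s_i\lambda\ne\lambda$ and, at $(\ast)$, $u_\lambda(x_i/x_{i+1})\notin\{1,t,t^{-1}\}$. For $a\ge2,b\ge1$, $(i,j)$ is a neighborhood of type $(a,b)$ in $\lambda$ if $\rho(\lambda)_i-\rho(\lambda)_j=a-1$ and either $\lambda_i-\lambda_j\le b-1$, or $\lambda_i-\lambda_j=b$ and $j<i$. $B^{(k,r)}$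 is the set of $\lambda\in P$ having no neighborhood of type $(k+1,r-1)$. An enlargement of $\lambda$ is $\lambda'\in P$ with $\rho(\lambda')=\rho(\lambda)$ and $\lambda'_{i_a}-\lambda'_{i_{a+1}}>\max\{[\frac n{k+1}](r-1),\lambda_{i_a}-\lambda_{i_{a+1}}\}$ for all $1\le a\le n-1$. *)

From HB Require Import structures.
From mathcomp Require Import all_boot all_order all_algebra.
From Stdlib Require Import Relations.Relation_Definitions Relations.Relation_Operators.
Set Implicit Arguments. Unset Strict Implicit. Unset Printing Implicit Defensive.
Import Order.TTheory GRing.Theory Num.Theory.
Local Open Scope ring_scope.

(* Weights: P = Z^n, coordinates indexed 0..n-1 (paper: 1..n). *)
Definition wt (n : nat) := {ffun 'I_n -> int}.

(* coordinate at a natural index (0 outside the range; only used in range) *)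
Definition at_ (n : nat) (l : wt n) (j : nat) : int :=
  if insub j is Some i then l i else 0.

Definition pos (n : nat) (l : wt n) (i : 'I_n) : nat :=
  #|[set j : 'I_n | (l i < l j) || ((l j == l i) && (j < i)%N)]|.

(* rho(l)_i: the unique permutation of ((n-1)/2, ..., -(n-1)/2) with
   rho_i > rho_j iff l_i > l_j or (l_i = l_j and i < j);
   the index of rank a (1-based) gets (n+1)/2 - a. *)
Definition rho (n : nat) (l : wt n) (i : 'I_n) : rat :=
  ((n%:R - 1) / 2%:R) - (pos l i)%:R.

Definition omega (n : nat) (l : wt n) : wt n :=
  [ffun j : 'I_n => if (j.+1 < n)%N then at_ l j.+1 else at_ l 0 + 1].

(* s_i l swaps l_i and l_{i+1}  (here i is 0-based, i+1 < n) *)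
Definition sw (n : nat) (i : nat) (l : wt n) : wt n :=
  [ffun j : 'I_n => if val j == i then at_ l i.+1
                    else if val j == i.+1 then at_ l i else l j].

(* Specialization (ast): t = u^{(r-1)/g}, q = tau u^{-(k+1)/g}, with u a formal
   variable and tau = exp(2 pi i/(r-1)).  The values u_l(x_i/x_{i+1}) are
   monomials tau^m u^e (m : int, e : rat); since tau is a primitive
   (r-1)-th root of unity and u is transcendental, tau^m u^e = tau^m' u^e'
   iff m = m' mod (r-1) and e = e'. *)
Definition mon := (int * rat)%type.
Definition mon_mul (a b : mon) : mon := (a.1 + b.1, a.2 + b.2).
Definition mon_inv (a : mon) : mon := (- a.1, - a.2).
Definition mon_eq (r : nat) (a b : mon) : bool :=
  ((a.1 - b.1) %% (r.-1)%:Z == 0)%Z && (a.2 == b.2).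
Definition gk (k r : nat) : nat := gcdn k.+1 r.-1.
Definition t_mon (k r : nat) : mon := (0, ((r.-1 %/ gk k r)%N)%:R).
Definition t_pow (k r : nat) (x : rat) : mon := (0, x * (t_mon k r).2).
Definition q_pow (k r : nat) (z : int) : mon :=
  (z, - z%:~R * ((k.+1 %/ gk k r)%N)%:R).
Definition u_x (k r n : nat) (l : wt n) (j : 'I_n) : mon :=
  mon_mul (t_pow k r (- rho l j)) (q_pow k r (- l j)).
Definition u_ratio (k r n : nat) (l : wt n) (i : nat) : mon :=
  if insub i is Some ii then
    if insub i.+1 is Some jj then mon_mul (u_x k r l ii) (mon_inv (u_x k r l jj))
    else (0, 0)
  else (0, 0).

Definition inter_step (k r n : nat) (l m : wt n) : Prop :=
  m = omega l \/
  exists i : nat, [/\ (i.+1 < n)%N, m = sw i l, sw i l != l &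
     ~~ [|| mon_eq r (u_ratio k r l i) (0, 0),
            mon_eq r (u_ratio k r l i) (t_mon k r) |
            mon_eq r (u_ratio k r l i) (mon_inv (t_mon k r))]].

Definition intertwined (k r n : nat) : relation (wt n) :=
  clos_refl_sym_trans (wt n) (@inter_step k r n).

Definition neighborhood (n : nat) (a b : nat) (l : wt n) (i j : 'I_n) : Prop :=
  rho l i - rho l j = (a.-1)%:R /\
  ((l i - l j <= (b.-1)%:Z) \/ (l i - l j = b%:Z /\ (j < i)%N)).

Definition inB (k r n : nat) (l : wt n) : Prop :=
  forall i j : 'I_n, ~ neighborhood k.+1 r.-1 l i j.

(* l' is an enlargement of l; i_a is the index with rho_{i_a} = (n+1)/2 - a *)
Definition enlargement (k r n : nat) (l l' : wt n) : Prop :=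
  (forall i, rho l' i = rho l i) /\
  forall (a : nat) (i j : 'I_n), (1 <= a)%N -> (a <= n.-1)%N ->
    rho l i = (n.+1)%:R / 2%:R - a%:R ->
    rho l j = (n.+1)%:R / 2%:R - (a.+1)%:R ->
    Num.max (((n %/ k.+1)%N * r.-1)%N)%:Z (l i - l j) < l' i - l' j.

From mathcomp Require Import all_boot all_order all_algebra all_fingroup.
From mathcomp Require Import zify ring.
From Stdlib Require Import Relations.Relation_Operators.
Set Implicit Arguments. Unset Strict Implicit. Unset Printing Implicit Defensive.
Import Order.TTheory GRing.Theory Num.Theory.
Local Open Scope ring_scope.

(* Order the indices by the strict total order [key l i = n l_i - i]; [pos l]
   is the rank in it, i.e. the order recorded by rho(l).  Membership in
   B^(k,r) says that indices k ranks apart differ by more than n(r-1) in key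
   ([gapped]).  This is preserved by omega and by swapping an adjacent ascent
   l_i < l_(i+1), and under it such a swap is a legal step: u_l(x_i/x_(i+1))
   is tau^L u^e with L = l_(i+1) - l_i > 0, and for it to be 1 or t^(+-1) we
   would need L = M(r-1) and a rank gap M(k+1) + c >= Mk (|c| <= 1), which the
   gap condition forbids.  Hence l is intertwined with its sorted (dominant)
   rearrangement.  For dominant d and m <= n, omega^m d sorts to d with its
   first m parts raised by one, so d is intertwined with d + f for every weakly
   decreasing f.  Finally an enlargement has the same rho, hence the same
   ranks, and its sorted form exceeds that of l by a weakly decreasing vector. *)

Lemma ltz_mulD_lex (N : nat) (C X Y : int) : - N%:Z < Y -> Y < N%:Z ->
  (N%:Z * C < N%:Z * X + Y) = (C < X) || ((X == C) && (0 < Y)).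
Proof.
move=> hY1 hY2; case: (ltrgtP C X) => hCX /=.
- have: N%:Z * (C + 1) <= N%:Z * X by rewrite ler_wpM2l //; lia.
  lia.
- have: N%:Z * (X + 1) <= N%:Z * C by rewrite ler_wpM2l //; lia.
  lia.
- by subst X; lia.
Qed.

Section Rank.
Variables (n : nat) (l : wt n).

Definition key (i : 'I_n) : int := n%:Z * l i - (i : nat)%:Z.

Lemma keyB (a b : 'I_n) :
  key a - key b = n%:Z * (l a - l b) + ((b : nat)%:Z - (a : nat)%:Z).
Proof. rewrite /key mulrBr; lia. Qed.

Lemma key_ltE (a b : 'I_n) :
  (key a < key b) = (l a < l b) || ((l a == l b) && (b < a)%N).
Proof.
have ha := ltn_ord a; have hb := ltn_ord b.
rewrite -subr_gt0 keyB -(mulr0 n%:Z) ltz_mulD_lex; [|lia|lia].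
by rewrite subr_gt0 subr_eq0 subr_gt0 ltz_nat eq_sym.
Qed.

Lemma key_inj : injective key.
Proof.
move=> a b eab; have := key_ltE a b; have := key_ltE b a; rewrite eab ltxx.
case: (ltrgtP (l a) (l b)) => //= _.
by move=> /esym/negbT ba /esym/negbT ab; apply: ord_inj; lia.
Qed.

Lemma pos_keyE (i : 'I_n) : pos l i = #|[set j | key i < key j]|.
Proof. by apply: eq_card => j; rewrite !inE key_ltE (eq_sym (l j)). Qed.

Lemma pos_ltn (i : 'I_n) : (pos l i < n)%N.
Proof.
rewrite pos_keyE -[X in (_ < X)%N]card_ord; apply: proper_card.
by apply/properP; split; [apply/subsetP | exists i; rewrite ?inE ?ltxx].
Qed.

Definition rank (i : 'I_n) : 'I_n := Ordinal (pos_ltn i).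

Lemma pos_key_lt (a b : 'I_n) : key a < key b -> (pos l b < pos l a)%N.
Proof.
move=> ab; rewrite !pos_keyE; apply: proper_card; apply/properP; split.
  by apply/subsetP => j; rewrite !inE => /(lt_trans ab).
by exists b; rewrite ?inE ?ltxx.
Qed.

Lemma key_le_pos (a b : 'I_n) : (pos l a <= pos l b)%N -> key b <= key a.
Proof. by move=> ab; rewrite leNgt; apply/negP => /pos_key_lt; rewrite ltnNge ab. Qed.

Lemma rank_inj : injective rank.
Proof.
move=> a b /(congr1 val) /= eab; apply: key_inj.
by apply/eqP; rewrite eq_le !key_le_pos ?eab.
Qed.

Lemma rank_surj (p : nat) : (p < n)%N -> exists i, pos l i = p.
Proof.
move=> hp; have [g _ gK] := injF_bij rank_inj.
by exists (g (Ordinal hp)); have /(congr1 val) := gK (Ordinal hp).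
Qed.

End Rank.

Lemma pos_relabel n (l l' : wt n) (s : 'I_n -> 'I_n) : injective s ->
  (forall a b, (key l' a < key l' b) = (key l (s a) < key l (s b))) ->
  forall a, pos l' a = pos l (s a).
Proof.
move=> s_inj s_key a; rewrite !pos_keyE -[RHS](card_preimset _ s_inj).
by apply: eq_card => j; rewrite !inE s_key.
Qed.

Lemma insub_ordE n j (hj : (j < n)%N) : insub j = Some (Ordinal hj) :> option 'I_n.
Proof. by rewrite insubT; congr Some; apply: val_inj. Qed.

Lemma at_ordE n (l : wt n) j (hj : (j < n)%N) : at_ l j = l (Ordinal hj).
Proof. by rewrite /at_ insub_ordE. Qed.

Lemma ordSE n (j : 'I_n) : (ordS j : nat) = if (j.+1 < n)%N then j.+1 else 0%N.
Proof.
case: ifP => /= hj; first by rewrite modn_small.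
by rewrite (_ : j.+1 = n) ?modnn //; have := ltn_ord j; lia.
Qed.

Lemma omegaE n (l : wt n) (j : 'I_n) :
  omega l j = l (ordS j) + (if (j.+1 < n)%N then 0 else 1).
Proof.
have n_gt0 : (0 < n)%N by apply: leq_ltn_trans (ltn_ord j).
rewrite /omega ffunE; case: ifP => hj.
  by rewrite (at_ordE _ hj) addr0; congr (l _); apply: ord_inj; rewrite ordSE hj.
by rewrite (at_ordE _ n_gt0); congr (l _ + _); apply: ord_inj; rewrite ordSE hj.
Qed.

Lemma key_omega n (l : wt n) (j : 'I_n) : key (omega l) j = key l (ordS j) + 1.
Proof.
rewrite /key omegaE; have := ordSE j; case: ifP => hj ->; first by rewrite addr0; lia.
have ej : j.+1 = n by have := ltn_ord j; lia.
by rewrite mulrDr mulr1; lia.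
Qed.

Lemma pos_omega n (l : wt n) (j : 'I_n) : pos (omega l) j = pos l (ordS j).
Proof.
by apply: pos_relabel => [|a b]; [exact: ordS_inj | rewrite !key_omega ltrD2r].
Qed.

Section AdjacentSwap.
Variables (n i : nat) (hi : (i.+1 < n)%N).

Definition swap_lo : 'I_n := Ordinal (ltnW hi).
Definition swap_hi : 'I_n := Ordinal hi.
Definition swap_perm : {perm 'I_n} := tperm swap_lo swap_hi.

Lemma swE (l : wt n) (j : 'I_n) : sw i l j = l (swap_perm j).
Proof.
rewrite /sw ffunE; case: (tpermP swap_lo swap_hi j) => [->|->|ne_lo ne_hi] /=.
- by rewrite eqxx (at_ordE _ hi).
- by rewrite gtn_eqF // eqxx (at_ordE _ (ltnW hi)).
have -> : (j == i :> nat) = false by apply/eqP => ej; apply: ne_lo; apply: ord_inj.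
by have -> : (j == i.+1 :> nat) = false by apply/eqP => ej; apply: ne_hi; apply: ord_inj.
Qed.

Lemma swap_perm_ltn (a b : 'I_n) :
  (a, b) != (swap_lo, swap_hi) -> (a, b) != (swap_hi, swap_lo) ->
  (swap_perm a < swap_perm b)%N = (a < b)%N.
Proof.
have val_lo (x : 'I_n) : (x == swap_lo) = (val x == i) by [].
have val_hi (x : 'I_n) : (x == swap_hi) = (val x == i.+1) by [].
rewrite !xpair_eqE !val_lo !val_hi /swap_perm.
case: tpermP => [->|->|/eqP + /eqP]; rewrite ?val_lo ?val_hi /=;
  case: tpermP => [->|->|/eqP + /eqP]; rewrite ?val_lo ?val_hi /=; lia.
Qed.

Lemma key_sw_lt (l : wt n) (a b : 'I_n) : l swap_lo != l swap_hi ->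
  (key (sw i l) a < key (sw i l) b) =
  (key l (swap_perm a) < key l (swap_perm b)).
Proof.
move=> ne_l; rewrite !key_ltE !swE.
case: eqP => [eq_ab|]; rewrite ?andbF //= eq_ab ltxx /=.
case: (eqVneq (a, b) (swap_lo, swap_hi)) => [[ea eb]|ne1].
  by move: eq_ab ne_l; rewrite ea eb /swap_perm tpermL tpermR => ->; rewrite eqxx.
case: (eqVneq (a, b) (swap_hi, swap_lo)) => [[ea eb]|ne2].
  by move: eq_ab ne_l; rewrite ea eb /swap_perm tpermL tpermR => ->; rewrite eqxx.
by rewrite swap_perm_ltn // !xpair_eqE andbC -?xpair_eqE.
Qed.

Lemma pos_sw (l : wt n) (a : 'I_n) : l swap_lo != l swap_hi ->
  pos (sw i l) a = pos l (swap_perm a).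
Proof.
by move=> ne_l; apply: pos_relabel => [|x y]; [exact: perm_inj | rewrite key_sw_lt].
Qed.

End AdjacentSwap.

Definition gapped (k r n : nat) (l : wt n) := forall a b : 'I_n,
  pos l b = (pos l a + k)%N -> ((n * r.-1)%N)%:Z < key l a - key l b.

Lemma gapped_omega k r n (l : wt n) : gapped k r l -> gapped k r (omega l).
Proof. by move=> gl a b; rewrite !pos_omega !key_omega => /gl; lia. Qed.

Lemma gapped_sw k r n i (hi : (i.+1 < n)%N) (l : wt n) :
  l (swap_lo hi) < l (swap_hi hi) -> gapped k r l -> gapped k r (sw i l).
Proof.
move=> asc gl a b; have ne_l := lt_eqF asc.
rewrite !pos_sw ?ne_l // => /gl; set s := swap_perm hi.
have ha := ltn_ord a; have hb := ltn_ord b.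
have hsa := ltn_ord (s a); have hsb := ltn_ord (s b).
rewrite !keyB !swE PoszM !ltz_mulD_lex; try lia.
case/orP => [-> //|/andP[/eqP eq_l pos_ab]]; apply/orP; right; rewrite eq_l eqxx /=.
case: (eqVneq (a, b) (swap_lo hi, swap_hi hi)) => [[-> ->] /=|ne1]; first lia.
case: (eqVneq (a, b) (swap_hi hi, swap_lo hi)) => [[ea eb]|ne2].
  by move: eq_l asc; rewrite ea eb /s /swap_perm tpermL tpermR; lia.
have := swap_perm_ltn ne1 ne2; rewrite -/s; lia.
Qed.

Definition inversions n (l : wt n) : nat :=
  #|[set p : 'I_n * 'I_n | (p.1 < p.2)%N && (l p.1 < l p.2)]|.

Lemma inversions_sw n i (hi : (i.+1 < n)%N) (l : wt n) :
  l (swap_lo hi) < l (swap_hi hi) -> (inversions (sw i l) < inversions l)%N.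
Proof.
move=> asc; set s := swap_perm hi.
pose f (p : 'I_n * 'I_n) := (s p.1, s p.2).
have f_inj : injective f by move=> [a b] [c d] [/perm_inj -> /perm_inj ->].
set A := [set p : 'I_n * 'I_n | (p.1 < p.2)%N && (l p.1 < l p.2)].
have A_lohi : (swap_lo hi, swap_hi hi) \in A by rewrite inE /= ltnSn asc.
rewrite /inversions -/A -(card_imset _ f_inj) (cardsD1 (swap_lo hi, swap_hi hi) A) A_lohi add1n ltnS.
apply: subset_leq_card; apply/subsetP => q /imsetP [[a b]].
rewrite inE /= !swE => /andP [lt_ab lt_l] ->.
have ne2 : (a, b) != (swap_hi hi, swap_lo hi).
  by apply: contraTneq lt_ab => -[-> ->]; rewrite /= ltnNge leqnSn.
case: (eqVneq (a, b) (swap_lo hi, swap_hi hi)) => [[ea eb]|ne1].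
  by move: lt_l asc; rewrite ea eb /s /swap_perm tpermL tpermR => /lt_trans h /h; rewrite ltxx.
rewrite !inE /f /= swap_perm_ltn // lt_ab lt_l !andbT.
have sK : involutive s := tpermK _ _.
apply: contra ne2 => /eqP [ea eb].
by rewrite -[a]sK -[b]sK ea eb /s /swap_perm tpermL tpermR.
Qed.

Lemma gapped_key_chain k r n (l : wt n) : gapped k r l -> forall M (x y : 'I_n),
  (pos l x + M * k <= pos l y)%N -> ((n * M * r.-1)%N)%:Z <= key l x - key l y.
Proof.
move=> gl; elim=> [|M IH] x y le_xy.
  by rewrite muln0 mul0n subr_ge0; apply: key_le_pos; rewrite addn0 in le_xy.
rewrite mulSn addnA in le_xy.
have [z pos_z] : exists z, pos l z = (pos l x + k)%N.
  by apply: rank_surj; have := pos_ltn l y; lia.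
have := IH z y; rewrite pos_z => /(_ le_xy).
have := gl x z pos_z; rewrite mulnSr mulnDl; lia.
Qed.

Definition t_exp (k r : nat) : rat := ((r.-1 %/ gk k r)%N)%:R.
Definition q_exp (k r : nat) : rat := ((k.+1 %/ gk k r)%N)%:R.

Lemma t_exp_neq0 k r : (2 <= r)%N -> t_exp k r != 0.
Proof.
move=> r2; have r1_gt0 : (0 < r.-1)%N by rewrite -ltnS prednK // ltnW.
rewrite pnatr_eq0 -lt0n divn_gt0 ?gcdn_gt0 ?r1_gt0 ?orbT //.
exact: dvdn_leq r1_gt0 (dvdn_gcdr _ _).
Qed.

Lemma q_exp_t_exp k r : (r.-1)%:R * q_exp k r = (k.+1)%:R * t_exp k r.
Proof.
rewrite -!natrM; congr _%:R.
by rewrite /gk !muln_divA ?dvdn_gcdl ?dvdn_gcdr // mulnC.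
Qed.

Lemma u_ratioE k r n i (hi : (i.+1 < n)%N) (l : wt n) :
  u_ratio k r l i = (l (swap_hi hi) - l (swap_lo hi),
    ((pos l (swap_lo hi))%:R - (pos l (swap_hi hi))%:R) * t_exp k r
    - (l (swap_hi hi) - l (swap_lo hi))%:~R * q_exp k r).
Proof.
rewrite /u_ratio (insub_ordE (ltnW hi)) (insub_ordE hi) -/(swap_lo hi) -/(swap_hi hi).
rewrite /mon_mul /mon_inv /u_x /mon_mul /t_pow /q_pow /rho /t_mon /=.
rewrite -/(t_exp k r) -/(q_exp k r); congr (_, _); first lia.
by rewrite !rmorphN /= !rmorphB /=; ring.
Qed.

Lemma mon_eq_t_powers k r (x : mon) :
  [|| mon_eq r x (0, 0), mon_eq r x (t_mon k r) | mon_eq r x (mon_inv (t_mon k r))] ->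
  (r.-1 %| x.1)%Z /\ exists2 c : int, `|c| <= 1 & x.2 = c%:~R * t_exp k r.
Proof.
rewrite /mon_eq /mon_inv /t_mon /= oppr0 subr0 -/(t_exp k r).
case/or3P => /andP [/eqP/dvdz_mod0P div_r /eqP ->]; split => //.
- by exists 0; rewrite ?mul0r.
- by exists 1; rewrite ?mul1r.
- by exists (-1); rewrite ?mulN1r.
Qed.

Lemma nonblocking_ascent k r n i (hi : (i.+1 < n)%N) (l : wt n) :
  (2 <= r)%N -> gapped k r l -> l (swap_lo hi) < l (swap_hi hi) ->
  ~~ [|| mon_eq r (u_ratio k r l i) (0, 0), mon_eq r (u_ratio k r l i) (t_mon k r)
       | mon_eq r (u_ratio k r l i) (mon_inv (t_mon k r))].
Proof.
move=> r2 gl; set lo := swap_lo hi; set hi' := swap_hi hi => asc.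
apply/negP => /mon_eq_t_powers []; rewrite u_ratioE /= => /dvdzP [M eq_L] [c abs_c].
have lt_pos : (pos l hi' < pos l lo)%N by apply: pos_key_lt; rewrite key_ltE asc.
set d := (pos l lo - pos l hi')%N.
have -> : ((pos l lo)%:R - (pos l hi')%:R : rat) = d%:R by rewrite natrB // ltnW.
rewrite eq_L.
move=> /eqP; rewrite -subr_eq0 => /eqP eq0.
have {eq0} eq_d : (d%:Z - M * (k.+1)%:Z - c)%:~R * t_exp k r = 0 :> rat.
  by rewrite -eq0 intrM -mulrA q_exp_t_exp; ring.
move: eq_d => /eqP; rewrite mulf_eq0 (negbTE (t_exp_neq0 k r2)) orbF intr_eq0 => /eqP eq_d.
have M_gt0 : 0 < M by move: asc; rewrite -subr_gt0 eq_L pmulr_lgt0 ?ltz_nat //; lia.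
case: M M_gt0 eq_L eq_d => // m m_gt0 eq_L; rewrite -PoszM mulnS => eq_d.
have chain : (pos l hi' + m * k <= pos l lo)%N by move: eq_d abs_c; rewrite /d; lia.
have := gapped_key_chain gl chain; rewrite keyB eq_L -!PoszM mulnA.
have := ltn_ord lo; have := ltn_ord hi'; rewrite /lo /hi' /=; lia.
Qed.

Lemma intertwined_omega k r n (l : wt n) : intertwined k r l (omega l).
Proof. by apply: rst_step; left. Qed.

Lemma intertwined_sw_ascent k r n i (hi : (i.+1 < n)%N) (l : wt n) :
  (2 <= r)%N -> gapped k r l -> l (swap_lo hi) < l (swap_hi hi) ->
  intertwined k r l (sw i l).
Proof.
move=> r2 gl asc; apply: rst_step; right; exists i; split => //.
  apply: contraTneq asc => /(congr1 (fun l' : wt n => l' (swap_lo hi))).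
  by rewrite swE /swap_perm tpermL => ->; rewrite ltxx.
exact: nonblocking_ascent.
Qed.

Definition dominant n (l : wt n) := forall a b : 'I_n, (a <= b)%N -> l b <= l a.

Lemma nonincreasing_from_adjacent d (T : porderType d) n (g : 'I_n -> T) :
  (forall a b : 'I_n, (b : nat) = a.+1 -> (g b <= g a)%O) ->
  forall a b : 'I_n, (a <= b)%N -> (g b <= g a)%O.
Proof.
move=> g_adj.
suff H m (a b : 'I_n) : (b : nat) = (a + m)%N -> (g b <= g a)%O.
  by move=> a b ab; apply: (H (b - a)%N); rewrite subnKC.
elim: m a b => [|m IH] a b eq_b; first by rewrite addn0 in eq_b; rewrite (ord_inj eq_b).
have hm : (a + m < n)%N by have := ltn_ord b; lia.
by apply: le_trans (IH a (Ordinal hm) erefl); apply: g_adj => /=; lia.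
Qed.

Lemma card_ord_ltn n (a : 'I_n) : #|[set j : 'I_n | (j < a)%N]| = a.
Proof.
have a_le : (a <= n)%N by apply: ltnW.
have w_inj : injective (widen_ord a_le) by move=> x y /(congr1 val) /= /val_inj.
rewrite -[RHS]card_ord -(card_imset _ w_inj); apply: eq_card => j.
rewrite inE; apply/idP/imsetP => [j_lt|[x _ ->]]; last by rewrite /= ltn_ord.
by exists (Ordinal j_lt) => //; apply: val_inj.
Qed.

Lemma pos_dominant n (l : wt n) (a : 'I_n) : dominant l -> pos l a = a.
Proof.
move=> dl; rewrite pos_keyE -[RHS]card_ord_ltn; apply: eq_card => j.
rewrite !inE key_ltE; case: (ltngtP j a) => ja /=.
- by move: (dl j a (ltnW ja)); lia.
- by move: (dl a j (ltnW ja)); lia.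
- by rewrite (ord_inj ja) ltxx eqxx.
Qed.

Lemma nonincreasing_or_adjacent_ascent d (T : orderType d) n (g : 'I_n -> T) :
  (forall a b : 'I_n, (a <= b)%N -> (g b <= g a)%O) \/
  exists a b : 'I_n, (b : nat) = a.+1 /\ (g a < g b)%O.
Proof.
case: (boolP [exists a : 'I_n, exists b : 'I_n, ((b : nat) == a.+1) && (g a < g b)%O]).
  by case/existsP => a /existsP [b /andP [/eqP eq_b lt_ab]]; right; exists a, b.
move=> no_ascent; left; apply: nonincreasing_from_adjacent => a b eq_b.
rewrite leNgt; apply: contra no_ascent => lt_ab.
by apply/existsP; exists a; apply/existsP; exists b; rewrite lt_ab andbT; apply/eqP.
Qed.

Lemma dominant_or_ascent n (l : wt n) :
  dominant l \/ exists i (hi : (i.+1 < n)%N), l (swap_lo hi) < l (swap_hi hi).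
Proof.
case: (nonincreasing_or_adjacent_ascent l) => [|[a [b [eq_b lt_ab]]]]; [by left | right].
have hi : (a.+1 < n)%N by rewrite -eq_b ltn_ord.
exists a, hi; have -> : swap_lo hi = a by apply: val_inj.
by have -> : swap_hi hi = b by apply: val_inj.
Qed.


Lemma sort_intertwined k r n (l : wt n) : (2 <= r)%N -> gapped k r l ->
  exists d, [/\ dominant d, gapped k r d, intertwined k r l d &
                forall j, d (rank l j) = l j].
Proof.
move=> r2; elim: {l}(inversions l).+1 {-2}l (ltnSn (inversions l)) => // N IH l lt_N gl.
case: (dominant_or_ascent l) => [dl|[i [hi asc]]].
  exists l; split => //; first exact: rst_refl.
  by move=> j; congr (l _); apply: val_inj; rewrite /= pos_dominant.
have ne_l := lt_eqF asc.
have [d [dd gd l_d d_rank]] :=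
  IH (sw i l) (leq_trans (inversions_sw asc) lt_N) (gapped_sw asc gl).
exists d; split => //; first by apply: rst_trans l_d; exact: intertwined_sw_ascent.
move=> j; have := d_rank (swap_perm hi j); rewrite swE /swap_perm tpermK => <-.
by congr (d _); apply: val_inj; rewrite /= pos_sw ?ne_l // /swap_perm tpermK.
Qed.

Lemma intertwined_sorted k r n (c d : wt n) : (2 <= r)%N -> gapped k r c ->
  dominant d -> (forall j, d (rank c j) = c j) -> intertwined k r c d.
Proof.
move=> r2 gc dd d_rank; have [d' [_ _ c_d' d'_rank]] := sort_intertwined r2 gc.
suff -> : d = d' by [].
apply/ffunP => x; have [j pos_j] := rank_surj c (ltn_ord x).
have -> : x = rank c j by apply: val_inj.
by rewrite d_rank d'_rank.
Qed.

Definition bump_prefix n (l : wt n) (m : nat) : wt n :=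
  [ffun x : 'I_n => l x + ((x < m)%N : nat)%:Z].

Lemma iter_ordSE n m (j : 'I_n) : (iter m (@ordS n) j : nat) = ((j + m) %% n)%N.
Proof.
elim: m => [|m IH]; first by rewrite addn0 modn_small.
by rewrite iterS /= IH -addn1 modnDml addn1 addnS.
Qed.

Lemma pos_iter_omega n m (l : wt n) (j : 'I_n) :
  pos (iter m (@omega n) l) j = pos l (iter m (@ordS n) j).
Proof. by elim: m j => [|m IH] j //; rewrite iterS pos_omega IH -iterSr. Qed.

Lemma iter_omegaE n m (l : wt n) (j : 'I_n) : (m <= n)%N ->
  iter m (@omega n) l j = l (iter m (@ordS n) j) + ((n <= j + m)%N : nat)%:Z.
Proof.
elim: m j => [|m IH] j m_le; first by rewrite addn0 leqNgt ltn_ord addr0.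
rewrite iterS omegaE IH ?(ltnW m_le) // -iterSr -addrA ordSE; congr (_ + _).
case: ifP => hj; first by rewrite addr0 addSnnS.
have ej : j.+1 = n by have := ltn_ord j; lia.
by rewrite add0n leqNgt m_le addnS -addSn ej leq_addr.
Qed.

Lemma intertwined_iter_omega k r n m (l : wt n) :
  intertwined k r l (iter m (@omega n) l).
Proof.
elim: m => [|m IH]; first exact: rst_refl.
by apply: rst_trans IH _; exact: intertwined_omega.
Qed.

Lemma gapped_iter_omega k r n m (l : wt n) :
  gapped k r l -> gapped k r (iter m (@omega n) l).
Proof. by move=> gl; elim: m => //= m; exact: gapped_omega. Qed.

Lemma dominant_bump_prefix n (l : wt n) (m : nat) :
  dominant l -> dominant (bump_prefix l m).
Proof.
move=> dl a b ab; rewrite !ffunE; have := dl a b ab.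
by case: (ltnP b m); case: (ltnP a m) => /=; lia.
Qed.

Lemma intertwined_bump_prefix k r n (l : wt n) m : (2 <= r)%N -> (m <= n)%N ->
  dominant l -> gapped k r l -> intertwined k r l (bump_prefix l m).
Proof.
move=> r2 m_le dl gl; set c := iter m (@omega n) l.
apply: rst_trans (intertwined_iter_omega k r m l) _.
apply: (intertwined_sorted r2 (gapped_iter_omega gl) (dominant_bump_prefix m dl)).
move=> j; have -> : rank c j = iter m (@ordS n) j.
  by apply: val_inj; rewrite /= pos_iter_omega pos_dominant.
rewrite iter_omegaE // ffunE iter_ordSE; congr (_ + (nat_of_bool _)%:Z).
have := ltn_ord j; case: (ltnP (j + m) n) => [jm_lt|jm_ge] j_lt.
  by rewrite modn_small // ltnNge leq_addl.
by rewrite -(subnK jm_ge) modnDr modn_small; lia.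
Qed.

Lemma gapped_dominant_mono k r n (l l' : wt n) : dominant l -> dominant l' ->
  (forall a b : 'I_n, (a <= b)%N -> l a - l b <= l' a - l' b) ->
  gapped k r l -> gapped k r l'.
Proof.
move=> dl dl' le_diff gl a b; rewrite !pos_dominant // => pos_b.
have := gl a b; rewrite !pos_dominant // => /(_ pos_b); rewrite !keyB.
have : n%:Z * (l a - l b) <= n%:Z * (l' a - l' b).
  by rewrite ler_wpM2l // le_diff // pos_b leq_addr.
lia.
Qed.

Section AddNonincreasing.
Variables (k r : nat) (r2 : (2 <= r)%N).

Lemma intertwined_add_const_nat n (l : wt n) (c : nat) : dominant l -> gapped k r l ->
  intertwined k r l [ffun x => l x + c%:Z].
Proof.
move=> dl gl; elim: c => [|c IH].
  rewrite (_ : [ffun x => _] = l); first exact: rst_refl.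
  by apply/ffunP => x; rewrite ffunE addr0.
set lc := [ffun x => l x + c%:Z] in IH *.
have dlc : dominant lc by move=> a b ab; rewrite !ffunE lerD2r dl.
have glc : gapped k r lc.
  by apply: gapped_dominant_mono dl dlc _ gl => a b _; rewrite !ffunE; lia.
have -> : [ffun x => l x + c.+1%:Z] = bump_prefix lc n.
  by apply/ffunP => x; rewrite !ffunE ltn_ord; lia.
by apply: rst_trans IH (intertwined_bump_prefix r2 (leqnn n) dlc glc).
Qed.

Lemma intertwined_add_const n (l : wt n) (c : int) : dominant l -> gapped k r l ->
  intertwined k r l [ffun x => l x + c].
Proof.
move=> dl gl; case: c => c; first exact: intertwined_add_const_nat.
set lc := [ffun x => l x + Negz c].
have dlc : dominant lc by move=> a b ab; rewrite !ffunE lerD2r dl.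
have glc : gapped k r lc.
  by apply: gapped_dominant_mono dl dlc _ gl => a b _; rewrite !ffunE; lia.
have -> : l = [ffun x => lc x + c.+1%:Z].
  by apply/ffunP => x; rewrite /lc !ffunE NegzE subrK.
exact: rst_sym (intertwined_add_const_nat c.+1 dlc glc).
Qed.

Lemma intertwined_add_nonincreasing n (d : wt n.+1) (f : 'I_n.+1 -> int) :
  dominant d -> gapped k r d -> (forall a b : 'I_n.+1, (a <= b)%N -> f b <= f a) ->
  intertwined k r d [ffun x => d x + f x].
Proof.
move=> dd gd f_noninc.
have [mu] : exists mu : nat, f ord0 - f ord_max = mu%:Z.
  by exists `|f ord0 - f ord_max|%N; rewrite gez0_abs // subr_ge0 f_noninc.
elim: mu d f dd gd f_noninc => [|mu IH] d f dd gd f_noninc eq_mu.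
  have f_const x : f x = f ord_max.
    apply/eqP; rewrite eq_le (f_noninc x ord_max) ?leq_ord // andbT.
    by move: (f_noninc ord0 x isT) eq_mu; lia.
  rewrite (_ : [ffun x => _] = [ffun x => d x + f ord_max]).
    exact: intertwined_add_const.
  by apply/ffunP => x; rewrite !ffunE f_const.
have [a [b [eq_b drop]]] : exists a b : 'I_n.+1, (b : nat) = a.+1 /\ f b < f a.
  case: (nonincreasing_or_adjacent_ascent (fun x => - f x)) => [f_nondec|[a [b []]]].
    by have := f_nondec ord0 ord_max isT; move: eq_mu; lia.
  by rewrite ltrN2 => eq_b drop; exists a, b.
have a1_le : (a.+1 <= n.+1)%N by rewrite -eq_b ltnW.
pose f1 x := f x - ((x < a.+1)%N : nat)%:Z.
have dd1 := dominant_bump_prefix a.+1 dd.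
have gd1 : gapped k r (bump_prefix d a.+1).
  apply: gapped_dominant_mono dd dd1 _ gd => x y xy; rewrite !ffunE.
  by case: (ltnP x a.+1); case: (ltnP y a.+1) => /=; lia.
have -> : [ffun x => d x + f x] = [ffun x => bump_prefix d a.+1 x + f1 x].
  by apply/ffunP => x; rewrite !ffunE /f1 addrACA subrr addr0.
apply: rst_trans (intertwined_bump_prefix r2 a1_le dd gd) (IH _ _ dd1 gd1 _ _).
  move=> x y xy; rewrite /f1; have := f_noninc x y xy.
  case: (ltnP x a.+1); case: (ltnP y a.+1) => //= y_ge x_lt; try lia.
  have := f_noninc b y; have := f_noninc x a; rewrite eq_b; lia.
rewrite /f1 /=; have := ltn_ord b; rewrite eq_b ltnS => a_lt.
by rewrite ltnNge a_lt /=; move: eq_mu; lia.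
Qed.

End AddNonincreasing.

Lemma rhoB n (l : wt n) (a b : 'I_n) : rho l a - rho l b = (pos l b)%:R - (pos l a)%:R.
Proof. by rewrite /rho; ring. Qed.

Lemma inB_gapped k r n (l : wt n) : (1 <= k)%N -> inB k r l -> gapped k r l.
Proof.
move=> k_gt0 hB a b pos_b.
have not_nb : ~ (l a - l b <= (r.-1.-1)%:Z \/ l a - l b = (r.-1)%:Z /\ (b < a)%N).
  by move=> nb; apply: (hB a b); split => //; rewrite rhoB pos_b natrD addrAC subrr add0r.
have ne_ab : (a : nat) <> b by move=> /ord_inj eq_ab; move: pos_b; rewrite eq_ab; lia.
have a_lt := ltn_ord a; have b_lt := ltn_ord b.
rewrite keyB PoszM ltz_mulD_lex; [|lia|lia].
case: (ltrgtP (r.-1)%:Z (l a - l b)) => [//|lt_r|eq_r] /=.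
  by exfalso; apply: not_nb; left; lia.
have : ~~ (b < a)%N by apply/negP => ba; apply: not_nb; right.
lia.
Qed.

Section Enlargement.
Variables (k r n : nat) (l l' : wt n) (hE : enlargement k r l l').

Lemma enlargement_pos (a : 'I_n) : pos l' a = pos l a.
Proof.
by have /eqP := hE.1 a; rewrite /rho (inj_eq (addrI _)) eqr_opp eqr_nat => /eqP.
Qed.

Lemma enlargement_gap_succ (x y : 'I_n) :
  pos l y = (pos l x).+1 -> l x - l y < l' x - l' y.
Proof.
move=> pos_y.
have rho_x : rho l x = (n.+1)%:R / 2%:R - ((pos l x).+1)%:R.
  by rewrite /rho -!natr1; field.
have rho_y : rho l y = (n.+1)%:R / 2%:R - ((pos l x).+2)%:R.
  by rewrite /rho pos_y -!natr1; field.
have x_le : ((pos l x).+1 <= n.-1)%N by have := pos_ltn l y; rewrite pos_y; lia.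
by have := hE.2 _ x y (ltn0Sn _) x_le rho_x rho_y; rewrite gt_max => /andP[].
Qed.

Lemma enlargement_gap m (x y : 'I_n) :
  pos l y = (pos l x + m)%N -> l x - l y + m%:Z <= l' x - l' y.
Proof.
elim: m y => [|m IH] y pos_y.
  rewrite addn0 in pos_y.
  have -> : y = x by apply: (@rank_inj _ l); apply: val_inj.
  by rewrite !subrr.
have [z pos_z] : exists z, pos l z = (pos l x + m)%N.
  by apply: rank_surj; have := pos_ltn l y; lia.
have := IH z pos_z; have := @enlargement_gap_succ z y; rewrite pos_z pos_y addnS.
move=> /(_ erefl); lia.
Qed.

Lemma enlargement_gapped : gapped k r l -> gapped k r l'.
Proof.
move=> gl a b; rewrite !enlargement_pos => pos_b.
have gap := enlargement_gap pos_b.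
have : n%:Z * (l a - l b) <= n%:Z * (l' a - l' b) by rewrite ler_wpM2l //; lia.
have := gl a b pos_b; rewrite !keyB; lia.
Qed.

End Enlargement.

Lemma enlargement_sorted_nonincreasing k r n (l l' d d' : wt n) :
  enlargement k r l l' ->
  (forall j, d (rank l j) = l j) -> (forall j, d' (rank l' j) = l' j) ->
  forall a b : 'I_n, (a <= b)%N -> d' b - d b <= d' a - d a.
Proof.
move=> hE d_rank d'_rank a b ab.
have rank_l' j : rank l' j = rank l j by apply: val_inj; exact: enlargement_pos hE j.
have [xa pos_xa] := rank_surj l (ltn_ord a); have [xb pos_xb] := rank_surj l (ltn_ord b).
have -> : a = rank l xa by apply: val_inj.
have -> : b = rank l xb by apply: val_inj.
rewrite -!rank_l' !d'_rank !rank_l' !d_rank.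
have := enlargement_gap hE (m := (b - a)%N) (x := xa) (y := xb).
by rewrite pos_xa pos_xb subnKC // => /(_ erefl); lia.
Qed.

Theorem lemma4p4 (n k r : nat) (hk1 : (1 <= k)%N) (hkn : (k <= n.-1)%N)
  (hr : (2 <= r)%N) (l l' : wt n) :
  inB k r l -> enlargement k r l l' -> intertwined k r l' l.
Proof.
move=> hB hE; have gl := inB_gapped hk1 hB.
have [d [dd gd l_d d_rank]] := sort_intertwined hr gl.
have [d' [_ _ l'_d' d'_rank]] := sort_intertwined hr (enlargement_gapped hE gl).
have f_noninc := enlargement_sorted_nonincreasing hE d_rank d'_rank.
apply: rst_trans l'_d' _; apply: rst_sym; apply: rst_trans l_d _.
have -> : d' = [ffun x => d x + (d' x - d x)].
  by apply/ffunP => x; rewrite ffunE addrC subrK.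
have [n' en] : exists n', n = n'.+1 by exists n.-1; lia.
by subst n; exact: (intertwined_add_nonincreasing (f := fun x => d' x - d x) hr dd gd).
Qed.
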